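(* Let $M$ be a finite monoid with identity $1$. (i) If $M$ is a group, then $\sigma_m(M)=\sigma_m^*(M)=\sigma_s(M)=\sigma_g(M)$. (ii) If $S=M-\{1\}$ is a subsemigroup of $M$ which is a group, then $\sigma_m^*(M)=\sigma_s(M)=2$ and $\sigma_m(M)=\sigma_g(S)$. (iii) If $S=M-\{1\}$ is a subsemigroup of $M$ which is monogenic but not a group, then $\sigma_s(M)=2$ and $\sigma_m^*(M)=\sigma_m(M)=\infty$. (iv) Otherwise, $\sigma_m(M)=\sigma_m^*(M)=\sigma_s(M)=2$.
   Context: A subsemigroup is a nonempty subset closed under the operation; monogenic means generated as a semigroup by a single element. For a monoid $M$: a submonoid is a subsemigroup containing the identity of $M$; a monoidal subsemigroup is a subsemigroup that is a monoid in its own right (identity possibly different from that of $M$). $\sigma_s$, $\sigma_m$, $\sigma_m^*$, $\sigma_g$ denote the least positive integer $n$ such that the structure is the union of $n$ proper subsemigroups, proper submonoids, proper monoidal subsemigroups, respectively proper subgroups (for a group), or $\infty$ if no such finite $n$ exists. *)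

From mathcomp Require Import all_boot.
Set Implicit Arguments. Unset Strict Implicit. Unset Printing Implicit Defensive.

Section Defs.
Variables (T : finType) (op : T -> T -> T).

Definition closed (A : {set T}) : Prop :=
  forall x y, x \in A -> y \in A -> op x y \in A.

Definition subsemigroup (X A : {set T}) : Prop :=
  A \subset X /\ A != set0 /\ closed A.

Definition is_identity_on (A : {set T}) (f : T) : Prop :=
  f \in A /\ forall x, x \in A -> op f x = x /\ op x f = x.

Definition is_monoid_on (A : {set T}) : Prop :=
  closed A /\ exists f, is_identity_on A f.

Definition is_group_on (A : {set T}) : Prop :=
  closed A /\ exists f, is_identity_on A f /\
    forall x, x \in A -> exists y, y \in A /\ op x y = f /\ op y x = f.

(* positive powers: pw x n = x^(n+1) *)
Definition pw (x : T) (n : nat) : T := iter n (op x) x.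

Definition monogenic_on (A : {set T}) : Prop :=
  exists x, x \in A /\ forall y, y \in A <-> exists n, y = pw x n.

Definition submonoid (e : T) (A : {set T}) : Prop :=
  subsemigroup setT A /\ e \in A.

Definition monoidal_subsemigroup (A : {set T}) : Prop :=
  subsemigroup setT A /\ is_monoid_on A.

Definition subgroup_of (X A : {set T}) : Prop :=
  A \subset X /\ is_group_on A.

Definition covers (P : {set T} -> Prop) (U : {set T}) (n : nat) : Prop :=
  exists F : seq {set T}, size F = n /\ (forall A, A \in F -> P A) /\
    \bigcup_(A <- F) A = U.

(* covering number: Some n = least positive n with a cover, None = infinity *)
Definition sigma_is (P : {set T} -> Prop) (U : {set T}) (k : option nat) : Prop :=
  match k with
  | Some n => 0 < n /\ covers P U n /\ forall m, 0 < m -> m < n -> ~ covers P U m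
  | None => forall n, 0 < n -> ~ covers P U n
  end.

Definition sigma_s_is (k : option nat) : Prop :=
  sigma_is (fun A => subsemigroup setT A /\ A != setT) setT k.
Definition sigma_m_is (e : T) (k : option nat) : Prop :=
  sigma_is (fun A => submonoid e A /\ A != setT) setT k.
Definition sigma_mstar_is (k : option nat) : Prop :=
  sigma_is (fun A => monoidal_subsemigroup A /\ A != setT) setT k.
Definition sigma_g_is (X : {set T}) (k : option nat) : Prop :=
  sigma_is (fun A => subgroup_of X A /\ A != X) X k.

End Defs.

(* Covering numbers are compared by translating covers: in a finite
   group every subsemigroup is a subgroup containing 1, so all four notions of
   proper substructure coincide; when M - {1} is a subsemigroup, {1} and M - {1}
   cover M, and proper submonoids correspond to their traces on M - {1}; when
   M - {1} is monogenic with generator x, a monoidal subsemigroup containing x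
   contains M - {1}, so it is M or the group M - {1}.
   In the remaining case either a nontrivial unit exists, and the units and the
   non-units together with 1 are two proper submonoids, or M - {1} is a
   subsemigroup that is neither a group nor monogenic.  Such a finite semigroup S
   is the union of two proper subsemigroups: if some x is not a product, take
   S - {x} and the subsemigroup generated by x; otherwise, if some xS is proper,
   either split S into the y with yS = S and the rest, or cover S by a maximal
   proper right ideal and some aS; dually for Sx; and if xS = Sx = S for all x,
   then S is a group. *)

From Pilot Require Import Defs.
From mathcomp Require Import all_boot.
From mathcomp Require Import boolp.
Set Implicit Arguments. Unset Strict Implicit. Unset Printing Implicit Defensive.

Section Covers.
Variable T : finType.
Implicit Types (P Q : {set T} -> Prop) (U V A B : {set T}).

Lemma covers_mono P Q U n :
  (forall A, P A -> Q A) -> covers P U n -> covers Q U n.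
Proof. by move=> PQ [F [sF [PF uF]]]; exists F; split=> //; split=> // A /PF /PQ. Qed.

Lemma sigma_is_exists P U : exists k, sigma_is P U k.
Proof.
have [[n [n0 cn]]|nex] := pselect (exists n, 0 < n /\ covers P U n); last first.
  by exists None => n n0 cn; apply: nex; exists n.
have ex : exists n, `[< 0 < n /\ covers P U n >] by exists n; apply/asboolP.
exists (Some (ex_minn ex)); case: ex_minnP => m /asboolP [m0 cm] min_m.
split=> //; split=> // k k0 ltkm ck.
by have := min_m k (introT (asboolP _) (conj k0 ck)); rewrite leqNgt ltkm.
Qed.

Lemma sigma_is_transfer P U Q V k :
  (forall n, 0 < n -> covers Q V n -> covers P U n) ->
  (forall n, 0 < n -> covers P U n -> exists2 m, 0 < m <= n & covers Q V m) ->
  sigma_is P U k -> sigma_is Q V k.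
Proof.
move=> QP PQ; case: k => [n|] /=; last by move=> noc n n0 /(QP n n0); apply: noc.
move=> [n0 [cn min_n]]; have [m /andP [m0 le_mn] cm] := PQ n n0 cn.
have -> : n = m.
  apply/eqP; rewrite eqn_leq le_mn andbT leqNgt; apply/negP => lt_mn.
  exact: min_n m0 lt_mn (QP m m0 cm).
split=> //; split=> // j j0 lt_jm /(QP j j0); exact: min_n j0 (leq_trans lt_jm le_mn).
Qed.

Lemma eq_sigma_is P Q U k :
  (forall A, P A <-> Q A) -> sigma_is P U k -> sigma_is Q U k.
Proof.
move=> PQ; apply: sigma_is_transfer => n n0 cn.
  by apply: covers_mono cn => A /PQ.
by exists n; [rewrite n0 leqnn | apply: covers_mono cn => A /PQ].
Qed.

Lemma sigma_is_two P U A B :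
  (forall C, P C -> C != U) -> P A -> P B -> A :|: B = U -> sigma_is P U (Some 2).
Proof.
move=> proper PA PB AB; split=> //; split.
  exists [:: A; B]; split=> //; split; last by rewrite !big_cons big_nil setU0.
  by move=> C; rewrite !inE => /orP [] /eqP ->.
move=> m m0 lt_m2 [F [sF [PF uF]]].
have {m0 lt_m2} : size F = 1 by rewrite sF; case: m m0 lt_m2 {sF} => [|[|]].
case: F PF uF {sF} => [|C [|]] // PF; rewrite big_seq1 => uF _.
by move: (proper C (PF C (mem_head _ _))); rewrite uF eqxx.
Qed.

Lemma covers_setU1 P Q U x n : 0 < n -> x \in U ->
  (forall B, P B -> Q (x |: B)) -> covers P (U :\ x) n -> covers Q U n.
Proof.
move=> n0 xU PQ [F [sF [PF uF]]]; exists [seq x |: B | B <- F]; rewrite size_map.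
split=> //; split; first by move=> _ /mapP [B BF ->]; apply/PQ/PF.
case: F sF {PF} uF n0 => [<- //|B0 F _ uF _]; rewrite big_map big_split /= uF.
suff -> : \bigcup_(B <- B0 :: F) [set x] = [set x] by rewrite setD1K.
apply/setP => y; rewrite bigcup_seq.
by apply/bigcupP/idP => [[] //|]; exists B0; rewrite ?mem_head.
Qed.

Lemma covers_setD1 P Q U x n :
  (forall A, P A -> A :\ x != set0 -> Q (A :\ x)) -> U :\ x != set0 ->
  covers P U n -> exists2 m, 0 < m <= n & covers Q (U :\ x) m.
Proof.
move=> PQ Ux0 [F [sF [PF uF]]]; pose F' := [seq A :\ x | A <- F & A :\ x != set0].
have uF' : \bigcup_(A <- F') A = U :\ x.
  apply/setP => y; rewrite -uF in_setD1 !bigcup_seq.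
  apply/bigcupP/andP => [[C CF' yC]|[yx /bigcupP [A AF yA]]].
    case/mapP: CF' yC => A; rewrite mem_filter => /andP [_ AF] ->.
    by rewrite in_setD1 => /andP [-> yA]; split=> //; apply/bigcupP; exists A.
  have yAx : y \in A :\ x by rewrite in_setD1 yx.
  exists (A :\ x) => //; apply/mapP; exists A; rewrite // mem_filter AF andbT.
  by apply/set0Pn; exists y.
exists (size F'); last first.
  exists F'; split=> //; split=> // C /mapP [A].
  by rewrite mem_filter => /andP [Ax0 /PF PA] ->; apply: PQ.
have -> : 0 < size F'.
  by move: Ux0; rewrite -uF' lt0n; apply: contra => /nilP ->; rewrite big_nil.
by rewrite size_map size_filter -sF count_size.
Qed.

Lemma uncovered_sigma_is_None P U x :
  x \in U -> (forall A, P A -> x \notin A) -> sigma_is P U None.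
Proof.
move=> xU Px n _ [F [_ [PF uF]]]; move: xU; rewrite -uF bigcup_seq.
by case/bigcupP => A AF; apply/negP/Px/PF.
Qed.

End Covers.

Section Semigroup.
Variables (T : finType) (op : T -> T -> T).
Hypothesis opA : associative op.
Implicit Types (A B S X : {set T}) (x y : T).

Lemma inj_in_onto (B : {set T}) (g : T -> T) :
  {in B &, injective g} -> (forall t, t \in B -> g t \in B) ->
  forall y, y \in B -> exists2 t, t \in B & g t = y.
Proof.
move=> g_inj gB y yB.
have sub : g @: B \subset B by apply/subsetP => _ /imsetP [t tB ->]; apply: gB.
have gBB : g @: B = B by apply/eqP; rewrite eqEcard sub (card_in_imset g_inj) leqnn.
have : y \in g @: B by rewrite gBB.
by case/imsetP => t tB ->; exists t.
Qed.

Lemma pwD x n m : op (pw op x n) (pw op x m) = pw op x (n + m).+1.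
Proof. by elim: n => //= n IH; rewrite /pw /= -/(pw op x n) -opA IH. Qed.

Lemma closed_pw A x n : Defs.closed op A -> x \in A -> pw op x n \in A.
Proof. by move=> cA xA; elim: n => //= n IH; rewrite /pw /= -/(pw op x n) cA. Qed.

Definition monogen x := [set y | `[< exists n, y = pw op x n >]].

Lemma monogenP x y : reflect (exists n, y = pw op x n) (y \in monogen x).
Proof. by rewrite inE; apply: asboolP. Qed.

Lemma mem_monogen x : x \in monogen x.
Proof. by apply/monogenP; exists 0. Qed.

Lemma monogen_closed x : Defs.closed op (monogen x).
Proof.
by move=> _ _ /monogenP [n ->] /monogenP [m ->]; apply/monogenP; exists (n + m).+1; apply: pwD.
Qed.

Lemma monogen_sub A x : Defs.closed op A -> x \in A -> monogen x \subset A.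
Proof. by move=> cA xA; apply/subsetP => _ /monogenP [n ->]; apply: closed_pw. Qed.

(* Left multiplication is injective in a group, hence onto any finite closed subset. *)
Lemma group_on_sub X B :
  is_group_on op X -> B \subset X -> B != set0 -> Defs.closed op B -> is_group_on op B.
Proof.
move=> [_ [f [[fX idf] invX]]] sBX /set0Pn [a aB] cB.
have inX t : t \in B -> t \in X by apply: (subsetP sBX).
have mulI x t t' : x \in X -> t \in X -> t' \in X -> op x t = op x t' -> t = t'.
  move=> xX tX t'X xtt'; have [x' [_ [_ x'x]]] := invX x xX.
  by rewrite -(proj1 (idf t tX)) -(proj1 (idf t' t'X)) -x'x -!opA xtt'.
have solve x y : x \in B -> y \in B -> exists2 t, t \in B & op x t = y.
  move=> xB; apply: inj_in_onto => [t t' tB t'B|t tB]; last exact: cB.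
  by apply: mulI; apply: inX.
have fB : f \in B.
  have [t tB ata] := solve a a aB aB.
  suff -> : f = t by [].
  apply: (mulI a f t (inX a aB) fX (inX t tB)).
  by rewrite ata (proj2 (idf a (inX a aB))).
split=> //; exists f; split; first by split=> // x /inX /idf.
move=> x xB; have [t tB xt] := solve x f xB fB; exists t; split=> //; split=> //.
have [x' [x'X [_ x'x]]] := invX x (inX x xB).
suff -> : t = x' by [].
by rewrite -(proj1 (idf t (inX t tB))) -x'x -opA xt (proj2 (idf x' x'X)).
Qed.

(* The identity is a power [x^(m+1)] of the generator, so [x^m] inverts [x]. *)
Lemma monogenic_monoid_group S :
  Defs.closed op S -> monogenic_on op S -> is_monoid_on op S -> is_group_on op S.
Proof.
move=> cS [x [xS genS]] [_ [f [fS idf]]].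
split=> //; exists f; split; first by split.
pose invertible z := exists y, y \in S /\ op z y = f /\ op y z = f.
have inv_x : invertible x.
  have [[|m] fm] := (genS f).1 fS.
    by exists x; rewrite fm /= in idf *; have [-> _] := idf x xS.
  exists (pw op x m); split; first exact: closed_pw.
  by split; rewrite fm // -[x in op _ x]/(pw op x 0) pwD addn0.
have [x' [x'S [xx' x'x]]] := inv_x.
have inv_pw n : invertible (pw op x n).
  elim: n => // n [y [yS [py yp]]]; exists (op y x'); split; first exact: cS.
  rewrite /pw /= -/(pw op x n); split.
    by rewrite -opA [op (pw op x n) _]opA py (proj1 (idf x' x'S)).
  by rewrite -opA [op x' _]opA x'x (proj1 (idf _ (closed_pw n cS xS))).
by move=> z /genS [n ->]; apply: inv_pw.
Qed.

End Semigroup.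

Definition closed_split (T : finType) (op : T -> T -> T) (S : {set T}) :=
  exists A B : {set T},
    [/\ A != S, B != S, Defs.closed op A, Defs.closed op B & A :|: B = S].

Section RightIdeals.
Variables (T : finType) (op : T -> T -> T) (S : {set T}).
Hypotheses (opA : associative op) (cS : Defs.closed op S).
Implicit Types (A B : {set T}) (x y : T).

Definition rmulS x := [set op x y | y in S].

Definition rideal B := (B \subset S) && ([set op b y | b in B, y in S] \subset B).

Lemma rmulS_sub x : x \in S -> rmulS x \subset S.
Proof. by move=> xS; apply/subsetP => _ /imsetP [y yS ->]; apply: cS. Qed.

Lemma rmulS_rideal x : x \in S -> rideal (rmulS x).
Proof.
move=> xS; rewrite /rideal rmulS_sub //.
apply/subsetP => _ /imset2P [_ y /imsetP [w wS ->] yS ->].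
by rewrite -opA; apply/imsetP; exists (op w y) => //; apply: cS.
Qed.

Lemma rideal_closed B : rideal B -> Defs.closed op B.
Proof.
case/andP=> sBS /subsetP BSB x y xB yB; apply: BSB.
by apply/imset2P; exists x y => //; apply: (subsetP sBS).
Qed.

Lemma ridealU A B : rideal A -> rideal B -> rideal (A :|: B).
Proof.
move=> /andP [sAS AS_A] /andP [sBS BS_B]; rewrite /rideal subUset sAS sBS.
apply/subsetP => z /imset2P [b y]; rewrite inE => /orP [bA|bB] yS ->; rewrite inE.
  by rewrite (subsetP AS_A) //; apply/imset2P; exists b y.
by rewrite (subsetP BS_B) ?orbT //; apply/imset2P; exists b y.
Qed.

Lemma rmulS_mul x y : y \in S -> rmulS (op x y) \subset rmulS x.
Proof.
move=> yS; apply/subsetP => _ /imsetP [w wS ->]; rewrite -opA.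
by apply/imsetP; exists (op y w) => //; apply: cS.
Qed.

Lemma rmulS_mul_full x y : rmulS y = S -> rmulS (op x y) = rmulS x.
Proof.
move=> ySS; apply/setP => z; apply/imsetP/imsetP => [[w wS ->]|[w]].
  by rewrite -opA; exists (op y w) => //; rewrite -ySS; apply: imset_f.
move=> + ->; rewrite -{1}ySS => /imsetP [v vS ->].
by exists v; rewrite ?opA.
Qed.

(* The elements [y] with [y S = S] and the other ones form two closed sets. *)
Lemma split_rmulS_full u x :
  u \in S -> rmulS u = S -> x \in S -> rmulS x != S -> closed_split op S.
Proof.
move=> uS uSS xS xSS; pose R := [set y in S | rmulS y == S].
exists R, (S :\: R); split.
- by apply/eqP => RS; move: xS xSS; rewrite -{1}RS inE => /andP [_ ->].
- apply/eqP => SR_S; have : u \in S :\: R by rewrite SR_S.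
  by rewrite !inE uS uSS eqxx.
- move=> p q; rewrite !inE => /andP [pS /eqP pSS] /andP [qS /eqP qSS].
  by rewrite cS //= (rmulS_mul_full p qSS) pSS.
- move=> p q; rewrite !inE => /andP [pR pS] /andP [_ qS]; rewrite cS // andbT.
  apply: contra pR => /eqP pqSS; rewrite pS eqEsubset rmulS_sub //=.
  by rewrite -{1}pqSS rmulS_mul.
- by apply/setP => w; rewrite !inE; case: (w \in S); case: (rmulS w == S).
Qed.

(* When no [u S] is all of [S], a maximal proper right ideal [B] and some [a S]
   cover [S], because [S] is generated by products. *)
Lemma split_rmulS_proper x :
  S \subset [set op a b | a in S, b in S] -> x \in S ->
  (forall y, y \in S -> rmulS y != S) -> closed_split op S.
Proof.
move=> SS xS proper_rmulS.
pose proper_rideal := [pred B | rideal B && (B != S)].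
have proper_xS : proper_rideal (rmulS x) by rewrite /= rmulS_rideal ?proper_rmulS.
have [B /andP [idB BS] maxB] := arg_maxnP (fun B : {set T} => #|B|) proper_xS.
have [z zS zB] : exists2 z, z \in S & z \notin B.
  apply/subsetPn; apply: contra BS => SB; rewrite eqEsubset SB andbT.
  by case/andP: idB.
have /imset2P [a b aS bS zab] := subsetP SS z zS.
exists (rmulS a), B; split=> //.
- exact: proper_rmulS.
- exact/rideal_closed/rmulS_rideal.
- exact: rideal_closed.
apply/eqP; apply: contraT => aB_S.
have /maxB : proper_rideal (rmulS a :|: B) by rewrite /= ridealU ?rmulS_rideal.
suff ltB : #|B| < #|rmulS a :|: B| by rewrite /= leqNgt ltB.
apply: proper_card; rewrite properE subsetUr /=.
by apply/subsetPn; exists z; rewrite // inE zab imset_f.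
Qed.

Lemma split_rmulS x :
  S \subset [set op a b | a in S, b in S] -> x \in S -> rmulS x != S ->
  closed_split op S.
Proof.
move=> SS xS xSS; case: (boolP [exists u in S, rmulS u == S]).
  by case/exists_inP => u uS /eqP uSS; apply: split_rmulS_full uS uSS xS xSS.
move=> /exists_inP none; apply: split_rmulS_proper SS xS _ => y yS.
by apply/negP => ySS; apply: none; exists y.
Qed.

End RightIdeals.

Section SemigroupSplit.
Variables (T : finType) (op : T -> T -> T).
Hypothesis opA : associative op.
Local Notation opc := (fun x y => op y x).
Implicit Types (A S : {set T}).

Lemma opc_assoc : associative opc.
Proof. by move=> x y z; rewrite opA. Qed.

Lemma closed_opc A : Defs.closed opc A -> Defs.closed op A.
Proof. by move=> cA x y xA yA; apply: cA. Qed.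

Lemma closed_split_opc S : closed_split opc S -> closed_split op S.
Proof. by move=> [A [B [AS BS /closed_opc cA /closed_opc cB AB]]]; exists A, B. Qed.

(* If [x S = S x = S] for all [x], the solution [f] of [a f = a] is a two-sided
   identity and every [x] has a right and a left inverse. *)
Lemma group_of_rmulS S : S != set0 ->
  {in S, forall x, rmulS op S x = S} -> {in S, forall x, rmulS opc S x = S} ->
  is_group_on op S.
Proof.
move=> /set0Pn [a aS] xSS SxS.
have solve_r x y : x \in S -> y \in S -> exists2 t, t \in S & y = op x t.
  by move=> xS; rewrite -{1}(xSS x xS) => /imsetP.
have solve_l x y : x \in S -> y \in S -> exists2 t, t \in S & y = op t x.
  by move=> xS; rewrite -{1}(SxS x xS) => /imsetP.
have cS : Defs.closed op S by move=> x y xS yS; rewrite -(xSS x xS); apply: imset_f.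
have [f fS af] := solve_r a a aS aS.
have [g gS ga] := solve_l a a aS aS.
have idr b : b \in S -> op b f = b.
  by move=> bS; have [y yS ->] := solve_l a b aS bS; rewrite -opA -af.
have idl b : b \in S -> op g b = b.
  by move=> bS; have [y yS ->] := solve_r a b aS bS; rewrite opA -ga.
have gf : g = f by rewrite -[LHS]idr // idl.
split=> //; exists f; split; first by split=> // b bS; rewrite idr // -gf idl.
move=> x xS; have [y yS xy] := solve_r x f xS fS; have [z zS zx] := solve_l x f xS fS.
have yz : y = z by rewrite -[LHS]idl // gf zx -opA -xy idr.
by exists y; rewrite yz in xy *.
Qed.

Lemma semigroup_closed_split S : Defs.closed op S -> S != set0 ->
  ~ is_group_on op S -> ~ monogenic_on op S -> closed_split op S.
Proof.
move=> cS S0 not_group not_mono.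
case: (boolP (S \subset [set op a b | a in S, b in S])) => [SS|]; last first.
  case/subsetPn => x xS x_nprod; exists (S :\ x), (monogen op x); split.
  - by apply: contraTneq xS => <-; rewrite !inE eqxx.
  - apply/eqP => xgen; apply: not_mono; exists x; split=> // y.
    by rewrite -xgen; split=> /monogenP.
  - move=> p q; rewrite !inE => /andP [px pS] /andP [qx qS]; rewrite cS // andbT.
    by apply: contraNneq x_nprod => <-; apply: imset2_f.
  - exact: monogen_closed.
  apply/eqP; rewrite eqEsubset subUset subsetDl monogen_sub //=.
  apply/subsetP => w wS; rewrite in_setU in_setD1 wS andbT.
  by case: eqP => [->|]; rewrite ?mem_monogen ?orbT.
have [[x xS xSS]|xSS] := pselect (exists2 x, x \in S & rmulS op S x != S).
  exact: split_rmulS SS xS xSS.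
have [[x xS SxS]|SxS] := pselect (exists2 x, x \in S & rmulS opc S x != S).
  apply/closed_split_opc/(split_rmulS opc_assoc _ _ xS SxS).
    by move=> p q pS qS; apply: cS.
  apply/subsetP => z /(subsetP SS) /imset2P [a b aS bS ->].
  by apply/imset2P; exists b a.
case: not_group; apply: group_of_rmulS => // x xS; apply/eqP; apply: contraT => neq.
  by case: xSS; exists x.
by case: SxS; exists x.
Qed.

End SemigroupSplit.

Section Monoid.
Variables (T : finType) (op : T -> T -> T) (e : T).
Hypotheses (opA : associative op) (op1x : left_id e op) (opx1 : right_id e op).
Implicit Types (A B : {set T}) (x y : T).

Local Notation S := (setT :\ e).

Lemma op_eq1C x y : op x y = e -> op y x = e.
Proof.
move=> xy; have op_y_inj : {in setT &, injective (op y)}.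
  by move=> t t' _ _ ytt'; rewrite -(op1x t) -(op1x t') -xy -!opA ytt'.
have [z _ yz] := inj_in_onto op_y_inj (fun t _ => in_setT (op y t)) (in_setT e).
suff -> : x = z by [].
by rewrite -[x]opx1 -yz opA xy op1x.
Qed.

Lemma closedU1 A : Defs.closed op A -> Defs.closed op (e |: A).
Proof.
move=> cA x y; rewrite !in_setU1 => /predU1P [->|xA] /predU1P [->|yA];
  by rewrite ?op1x ?opx1 ?eqxx ?xA ?yA ?cA ?orbT.
Qed.

Lemma submonoidU1 A : Defs.closed op A -> submonoid op e (e |: A).
Proof.
move=> cA; split; last exact: setU11.
split; first exact: subsetT.
by split; [apply/set0Pn; exists e; apply: setU11 | exact: closedU1].
Qed.

Lemma properU1 A : A \subset S -> A != S -> e |: A != setT.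
Proof.
move=> AS; apply: contra => /eqP eA; rewrite eqEsubset AS /=.
apply/subsetP => s; rewrite !inE andbT => se.
by move: (in_setT s); rewrite -eA in_setU1 (negbTE se).
Qed.

Lemma submonoid_monoidal A : submonoid op e A -> monoidal_subsemigroup op A.
Proof. by move=> [[sA [A0 cA]] eA]; do !split=> //; exists e; split=> // x. Qed.

Lemma set1e_submonoid : submonoid op e [set e].
Proof. by rewrite -[[set e]]setU0; apply: submonoidU1 => x y; rewrite inE. Qed.

Lemma set1e_proper : S != set0 -> [set e] != setT.
Proof.
case/set0Pn => s; rewrite !inE andbT => se.
by apply/eqP/setP => /(_ s); rewrite !inE (negbTE se).
Qed.

Lemma setD1e_proper : S != setT.
Proof. by apply/eqP/setP => /(_ e); rewrite !inE eqxx. Qed.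

Lemma sigma_is_two_set1e P :
  (forall C, P C -> C != setT) -> P [set e] -> P S -> sigma_is P setT (Some 2).
Proof. by move=> proper Pe PS; apply: (sigma_is_two proper Pe PS); rewrite setD1K. Qed.

Lemma setD1e_sub_full A : S \subset A -> e \in A -> A = setT.
Proof.
by move=> SA eA; apply/eqP; rewrite eqEsubset subsetT -(setD1K (in_setT e)) subUset sub1set eA.
Qed.

(* In a group an idempotent is the identity, so subsemigroups are submonoids. *)
Lemma group_subsemigroup A : is_group_on op setT -> subsemigroup op setT A ->
  is_group_on op A /\ e \in A.
Proof.
move=> gM [_ [A0 cA]]; have gA := group_on_sub opA gM (subsetT A) A0 cA.
split=> //; have [_ [g [[gA' idg] _]]] := gA; have gg := proj1 (idg g gA').
have [_ [f [[_ idf] invf]]] := gM; have [h [_ [_ hg]]] := invf g (in_setT g).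
have fe : f = e by rewrite -[f]opx1 (proj1 (idf e (in_setT e))).
suff <- : g = e by [].
by rewrite -fe -hg -{2}gg opA hg (proj1 (idf g (in_setT g))).
Qed.

Lemma sigmas_group : is_group_on op setT ->
  exists k, sigma_m_is op e k /\ sigma_mstar_is op k /\
            sigma_s_is op k /\ sigma_g_is op setT k.
Proof.
move=> gM; have [k sk] := sigma_is_exists (fun A => subsemigroup op setT A /\ A != setT) setT.
exists k; split; last split; last split => //; apply: eq_sigma_is sk => A; split.
- by move=> [sA nA]; split=> //; split=> //; apply: (group_subsemigroup gM sA).2.
- by move=> [[sA _] nA].
- move=> [sA nA]; split=> //; split=> //.
  by case: (group_subsemigroup gM sA) => [[cA [g [gA _]]] _]; split=> //; exists g.
- by move=> [[sA _] nA].
- by move=> [sA nA]; split=> //; split; [exact: subsetT | exact: (group_subsemigroup gM sA).1].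
- move=> [[_ [cA [g [[gA _] _]]]] nA]; split=> //; split; first exact: subsetT.
  by split=> //; apply/set0Pn; exists g.
Qed.

Lemma sigmas_setD1e_group : subsemigroup op setT S -> is_group_on op S ->
  sigma_mstar_is op (Some 2) /\ sigma_s_is op (Some 2) /\
  exists k, sigma_m_is op e k /\ sigma_g_is op S k.
Proof.
move=> sS gS; have [_ [S0 cS]] := sS.
split; first apply: sigma_is_two_set1e => [C [] //| |].
- by split; [apply: submonoid_monoidal; exact: set1e_submonoid | exact: set1e_proper].
- by split; [do 2!split=> //; case: gS => _ [f [idf _]]; exists f | exact: setD1e_proper].
split; first apply: sigma_is_two_set1e => [C [] //| |].
- by split; [case: set1e_submonoid | exact: set1e_proper].
- by split; [exact: sS | exact: setD1e_proper].
have [k sk] := sigma_is_exists (fun A => submonoid op e A /\ A != setT) setT.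
exists k; split=> //; apply: sigma_is_transfer sk => n n0 cn.
  apply: (covers_setU1 n0 (in_setT e) _ cn) => B [[BS [cB _]] nB].
  by split; [exact: submonoidU1 | exact: properU1].
apply: (covers_setD1 _ S0 cn) => A [[[_ [_ cA]] eA] nA] Ae0.
have sAS : A :\ e \subset S by apply: setSD; exact: subsetT.
have cAe : Defs.closed op (A :\ e).
  move=> x y; rewrite !in_setD1 => /andP [xe xA] /andP [ye yA]; rewrite cA // andbT.
  by move: (cS x y); rewrite !in_setD1 !in_setT !andbT; apply.
split; first by split=> //; apply: group_on_sub gS sAS Ae0 cAe.
apply: contra nA => /eqP AS; apply/eqP/setD1e_sub_full => //; rewrite -AS; exact: subsetDl.
Qed.

Lemma sigmas_setD1e_monogenic : subsemigroup op setT S -> monogenic_on op S ->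
  ~ is_group_on op S ->
  sigma_s_is op (Some 2) /\ sigma_mstar_is op None /\ sigma_m_is op e None.
Proof.
move=> sS mS not_group; have [_ [S0 cS]] := sS; have [x [xS genS]] := mS.
have S_sub A : Defs.closed op A -> x \in A -> S \subset A.
  by move=> cA xA; apply/subsetP => y /genS [n ->]; apply: closed_pw.
split; first apply: sigma_is_two_set1e => [C [] //| |].
- by split; [case: set1e_submonoid | exact: set1e_proper].
- by split; [exact: sS | exact: setD1e_proper].
split; apply: (uncovered_sigma_is_None (x := x) (in_setT x)) => A [].
  move=> [_ mA] nA; apply: contra nA => xA; have [cA _] := mA.
  have SA := S_sub A cA xA; case: (boolP (e \in A)) => [eA|eA].
    by rewrite (setD1e_sub_full SA eA).
  suff AS : A = S.
    by exfalso; apply/not_group/(monogenic_monoid_group opA) => //; rewrite -AS.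
  apply/eqP; rewrite eqEsubset SA andbT; apply/subsetP => y yA; rewrite in_setD1 in_setT andbT.
  by apply: contraNneq eA => <-.
move=> [[_ [_ cA]] eA] nA; apply: contra nA => xA.
by rewrite (setD1e_sub_full (S_sub A cA xA) eA).
Qed.

Definition units := [set x | [exists y, op x y == e]].

Lemma unitP x : reflect (exists y, op x y = e) (x \in units).
Proof. by rewrite inE; apply: (iffP existsP) => [[y /eqP]|[y /eqP]]; exists y. Qed.

Lemma units_closed : Defs.closed op units.
Proof.
move=> x y /unitP [x' xx'] /unitP [y' yy']; apply/unitP; exists (op y' x').
by rewrite -opA (opA y) yy' op1x.
Qed.

Lemma nonunits_closed : Defs.closed op (~: units).
Proof. by move=> x y; rewrite !inE => /existsPn xN _; apply/existsPn => z; rewrite -opA xN. Qed.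

Lemma group_of_units : units = setT -> is_group_on op setT.
Proof.
move=> units_T; split; first by move=> ? ? _ _; exact: in_setT.
exists e; split; first by split=> // y _.
move=> x _; have /unitP [y xy] : x \in units by rewrite units_T.
by exists y; split; [exact: in_setT | split; last exact: op_eq1C].
Qed.

Definition submonoid_split := exists A B,
  [/\ submonoid op e A, A != setT, submonoid op e B, B != setT & A :|: B = setT].

Lemma sigmas_submonoid_split : submonoid_split ->
  sigma_m_is op e (Some 2) /\ sigma_mstar_is op (Some 2) /\ sigma_s_is op (Some 2).
Proof.
move=> [A [B [mA nA mB nB AB]]].
split; last split; apply: (sigma_is_two (A := A) (B := B)) => //; try by move=> C [].
- by split=> //; apply: submonoid_monoidal.
- by split=> //; apply: submonoid_monoidal.
- by split=> //; case: mA.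
- by split=> //; case: mB.
Qed.

Lemma submonoid_split_units : ~ is_group_on op setT -> units != [set e] -> submonoid_split.
Proof.
move=> not_group units_ne; have [u uU ue] : exists2 u, u \in units & u != e.
  apply/exists_inP; apply: contraR units_ne => /exists_inPn no_unit; rewrite eqEsubset.
  rewrite sub1set (introT (unitP e)) ?andbT; last by exists e; rewrite op1x.
  by apply/subsetP => w wU; rewrite inE; apply/negPn/no_unit.
exists units, (e |: ~: units); split.
- split; last by apply/unitP; exists e; rewrite op1x.
  split; [exact: subsetT | split; last exact: units_closed].
  by apply/set0Pn; exists u.
- exact: contra_not_neq group_of_units not_group.
- exact/submonoidU1/nonunits_closed.
- by apply/eqP/setP => /(_ u); rewrite in_setU1 in_setC (negbTE ue) uU in_setT.
- apply/setP => w; rewrite in_setU in_setU1 in_setC in_setT.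
  by case: (w \in units); rewrite ?orbT.
Qed.

Lemma submonoid_split_setD1e : ~ is_group_on op setT ->
  ~ (subsemigroup op setT S /\ (is_group_on op S \/ monogenic_on op S)) ->
  units = [set e] -> submonoid_split.
Proof.
move=> not_group not_special units_e.
have cS : Defs.closed op S.
  move=> x y; rewrite !in_setD1 !in_setT !andbT => xe ye; apply/eqP => xy.
  have : x \in units by apply/unitP; exists y.
  by rewrite units_e inE (negbTE xe).
have S0 : S != set0.
  apply: contra_not_neq not_group => S0; apply: group_of_units; apply/setP => w.
  rewrite units_e in_setT inE; apply: contraT => we; suff : w \in S by rewrite S0 inE.
  by rewrite !inE we.
have sS : subsemigroup op setT S by split; [exact: subsetT | split].
have [A [B [AS BS cA cB AB]]] : closed_split op S.
  apply: semigroup_closed_split => // [gS|mS]; apply: not_special.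
  - by split; [|left].
  - by split; [|right].
exists (e |: A), (e |: B); split; try exact: submonoidU1.
- by apply: properU1 AS; rewrite -AB subsetUl.
- by apply: properU1 BS; rewrite -AB subsetUr.
- by rewrite -setUUr AB setD1K ?in_setT.
Qed.

End Monoid.

Theorem mainTheorem19 (T : finType) (op : T -> T -> T) (e : T)
  (opA : forall x y z, op x (op y z) = op (op x y) z)
  (op1x : forall x, op e x = x) (opx1 : forall x, op x e = x) :
  let S := setT :\ e in
  (is_group_on op setT ->
     exists k, sigma_m_is op e k /\ sigma_mstar_is op k /\
               sigma_s_is op k /\ sigma_g_is op setT k) /\
  (subsemigroup op setT S -> is_group_on op S ->
     sigma_mstar_is op (Some 2) /\ sigma_s_is op (Some 2) /\
     exists k, sigma_m_is op e k /\ sigma_g_is op S k) /\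
  (subsemigroup op setT S -> monogenic_on op S -> ~ is_group_on op S ->
     sigma_s_is op (Some 2) /\ sigma_mstar_is op None /\ sigma_m_is op e None) /\
  (~ is_group_on op setT ->
   ~ (subsemigroup op setT S /\ (is_group_on op S \/ monogenic_on op S)) ->
     sigma_m_is op e (Some 2) /\ sigma_mstar_is op (Some 2) /\ sigma_s_is op (Some 2)).
Proof.
move=> S; split; first exact: sigmas_group.
split; first exact: sigmas_setD1e_group.
split; first exact: sigmas_setD1e_monogenic.
move=> not_group not_special; apply: (sigmas_submonoid_split op1x opx1).
have [/eqP units_e|units_ne] := boolP (units op e == [set e]).
  exact: submonoid_split_setD1e units_e.
exact: submonoid_split_units units_ne.
Qed.
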